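(* Let $H_X\in\mathbb{F}_2^{m_X\times n}$ and $H_Z\in\mathbb{F}_2^{m_Z\times n}$ satisfy $H_XH_Z^{\mathsf T}=0$ over $\mathbb{F}_2$. Let $P\ge1$ and consider a CPM $P$ lift specified by shifts $s^X_{x,c}\in\mathbb{Z}_P$ for each nonzero entry $(x,c)$ of $H_X$ and $s^Z_{z,c}\in\mathbb{Z}_P$ for each nonzero entry $(z,c)$ of $H_Z$. Suppose there are a row $z$ of $H_Z$, four distinct rows $x_0,x_1,x_2,x_3$ of $H_X$, and four distinct columns $c_0,c_1,c_2,c_3$ such that, with indices modulo $4$, \[ \{c_{a-1},c_a\}\subseteq \mathrm{supp}(x_a)\cap\mathrm{supp}(z)\qquad(a=0,1,2,3). \] Then the Tanner graph of $H_X$ contains the 8-cycle $x_0-c_0-x_1-c_1-x_2-c_2-x_3-c_3-x_0$. Assume moreover that for each $a\in\{0,1,2,3\}$ the shifts satisfy the CSS zero constraint for the pair $(x_a,z)$ with the pair of shared columns $(c_{a-1},c_a)$, namely \[ s^X_{x_a,c_{a-1}}-s^Z_{z,c_{a-1}}-s^X_{x_a,c_a}+s^Z_{z,c_a}\equiv 0\pmod P \] (this is the case, in particular, when $\mathrm{supp}(x_a)\cap\mathrm{supp}(z)=\{c_{a-1},c_a\}$ and the lift satisfies the CSS zero constraints). Then the voltage of this 8-cycle is $0\pmod P$, and hence the cycle lifts to closed 8-cycles in every such CPM $P$ lift. The same statement holds with the roles of $X$ and $Z$ interchanged.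
   Context: The Tanner graph of a binary matrix $H$ is the bipartite graph with check nodes = rows, variable nodes = columns, and an edge $(r,c)$ iff $H_{rc}=1$; $\mathrm{supp}(x)$ denotes the set of columns where row $x$ is nonzero. A CPM $P$ lift replaces each nonzero entry $(r,c)$ with assigned shift $t\in\mathbb{Z}_P$ by the $P\times P$ circulant permutation matrix equal to the identity cyclically shifted by $t$, and each zero entry by the $P\times P$ zero block. CSS zero constraints: for every row $x$ of $H_X$ and row $z$ of $H_Z$, the (even-size) set of shared columns is partitioned into pairs, and for each pair $\{c,c'\}$ one imposes $s^X_{x,c}-s^Z_{z,c}-s^X_{x,c'}+s^Z_{z,c'}\equiv0\pmod P$; these guarantee the lifted matrices satisfy $\hat H_X\hat H_Z^{\mathsf T}=0$. The voltage of a Tanner cycle $r_0-c_0-r_1-c_1-\dots-r_{L-1}-c_{L-1}-r_0$ is the alternating signed sum of the shifts of its edges, $\sum_{a}(s_{r_a,c_{a-1}}-s_{r_a,c_a})$ (up to overall sign/orientation); a base cycle lifts to a closed cycle of the same length iff its voltage is $0\bmod P$. *)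

From mathcomp Require Import all_boot all_order all_algebra.
Set Implicit Arguments. Unset Strict Implicit. Unset Printing Implicit Defensive.
Import GRing.Theory Num.Theory.
Local Open Scope ring_scope.

Definition tanner {m n : nat} (H : 'M['F_2]_(m, n)) (r : 'I_m) (c : 'I_n) : bool :=
  H r c != 0.

Definition cycle8 {R C : eqType} (E : R -> C -> bool)
  (x0 x1 x2 x3 : R) (c0 c1 c2 c3 : C) : Prop :=
  uniq [:: x0; x1; x2; x3] /\ uniq [:: c0; c1; c2; c3] /\
  [/\ E x0 c0, E x1 c0, E x1 c1, E x2 c1 &
   [/\ E x2 c2, E x3 c2, E x3 c3 & E x0 c3]].

(* Tanner graph of the CPM-P lift of H with shifts s (values in Z_P represented
   by integers taken mod P): check (r,i) -- variable (c,j) iff H r c != 0 and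
   j = i + s r c (mod P), i.e. block (r,c) is the identity cyclically shifted by s r c. *)
Definition lift_tanner {m n : nat} (H : 'M['F_2]_(m, n)) (s : 'I_m -> 'I_n -> int)
  (P : nat) (v : 'I_m * 'I_P) (w : 'I_n * 'I_P) : bool :=
  (H v.1 w.1 != 0) && ((w.2 : nat)%:Z == ((v.2 : nat)%:Z + s v.1 w.1) %% (P : int))%Z.

Definition voltage8 {m n : nat} (s : 'I_m -> 'I_n -> int)
  (x0 x1 x2 x3 : 'I_m) (c0 c1 c2 c3 : 'I_n) : int :=
  (s x0 c3 - s x0 c0) + (s x1 c0 - s x1 c1) + (s x2 c1 - s x2 c2) + (s x3 c2 - s x3 c3).

Definition css_pair_constraint {mA mB n : nat}
  (sA : 'I_mA -> 'I_n -> int) (sB : 'I_mB -> 'I_n -> int) (P : nat)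
  (x : 'I_mA) (z : 'I_mB) (c c' : 'I_n) : Prop :=
  (sA x c - sB z c - sA x c' + sB z c' = 0 %[mod (P : int)])%Z.

(* One-sided statement: HA plays the role of H_X (four rows x_a), HB that of
   H_Z (one row z). *)
Definition eight_cycle_claim {mA mB n : nat}
  (HA : 'M['F_2]_(mA, n)) (HB : 'M['F_2]_(mB, n))
  (sA : 'I_mA -> 'I_n -> int) (sB : 'I_mB -> 'I_n -> int) (P : nat) : Prop :=
  forall (z : 'I_mB) (x0 x1 x2 x3 : 'I_mA) (c0 c1 c2 c3 : 'I_n),
    uniq [:: x0; x1; x2; x3] -> uniq [:: c0; c1; c2; c3] ->
    [/\ HA x0 c3 != 0, HA x0 c0 != 0, HB z c3 != 0 & HB z c0 != 0] ->
    [/\ HA x1 c0 != 0, HA x1 c1 != 0, HB z c0 != 0 & HB z c1 != 0] ->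
    [/\ HA x2 c1 != 0, HA x2 c2 != 0, HB z c1 != 0 & HB z c2 != 0] ->
    [/\ HA x3 c2 != 0, HA x3 c3 != 0, HB z c2 != 0 & HB z c3 != 0] ->
    cycle8 (tanner HA) x0 x1 x2 x3 c0 c1 c2 c3 /\
    ([/\ css_pair_constraint sA sB P x0 z c3 c0,
         css_pair_constraint sA sB P x1 z c0 c1,
         css_pair_constraint sA sB P x2 z c1 c2 &
         css_pair_constraint sA sB P x3 z c2 c3] ->
     (voltage8 sA x0 x1 x2 x3 c0 c1 c2 c3 = 0 %[mod (P : int)])%Z /\
     (forall i0 : 'I_P, exists (i1 i2 i3 j0 j1 j2 j3 : 'I_P),
        cycle8 (@lift_tanner mA n HA sA P) (x0, i0) (x1, i1) (x2, i2) (x3, i3)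
               (c0, j0) (c1, j1) (c2, j2) (c3, j3))).

(* The CSS constraint for (x_a, z) on (c_{a-1}, c_a) is the voltage contribution
   s^X_{x_a,c_{a-1}} - s^X_{x_a,c_a} of x_a corrected by the z-terms
   s^Z_{z,c_a} - s^Z_{z,c_{a-1}}; these corrections telescope around the cycle,
   so the sum of the four constraints is the voltage.  In the lift, walking once
   around a base cycle from sheet i returns to sheet i plus the voltage, so a
   cycle of voltage 0 mod P closes up from every starting sheet. *)

From mathcomp Require Import all_boot all_order all_algebra.
From mathcomp Require Import ring.
Set Implicit Arguments. Unset Strict Implicit. Unset Printing Implicit Defensive.
Import GRing.Theory Num.Theory.
Local Open Scope ring_scope.

Section CPMLift.
Variables (P : nat) (m n : nat) (H : 'M['F_2]_(m, n)) (s : 'I_m -> 'I_n -> int).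
Hypothesis P_gt0 : (0 < P)%N.

Let P_neq0 : (P : int) != 0. Proof. by rewrite eqz_nat -lt0n. Qed.

Lemma modz_ord_subproof (k : int) : (`|(k %% P)%Z|%N < P)%N.
Proof.
have : (k %% P)%Z < P by apply: ltz_pmod; rewrite ltz_nat.
by case: (k %% P)%Z (modz_ge0 k P_neq0) => // a _; rewrite ltz_nat.
Qed.

Definition modz_ord (k : int) : 'I_P := Ordinal (modz_ord_subproof k).

Lemma modz_ordE (k : int) : ((modz_ord k : nat) : int) = (k %% P)%Z.
Proof. by rewrite /= gez0_abs // modz_ge0. Qed.

Lemma modz_ord_val (i : 'I_P) : modz_ord (i : nat) = i.
Proof. by apply: val_inj; rewrite /= modz_nat modn_small. Qed.

Lemma lift_tanner_modz (x : 'I_m) (c : 'I_n) (a b : int) :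
  lift_tanner H s (x, modz_ord a) (c, modz_ord b) =
  tanner H x c && (b == a + s x c %[mod (P : int)])%Z.
Proof. by rewrite /lift_tanner /= !modz_ordE modzDml. Qed.

Lemma cycle8_lift (x0 x1 x2 x3 : 'I_m) (c0 c1 c2 c3 : 'I_n) :
  cycle8 (tanner H) x0 x1 x2 x3 c0 c1 c2 c3 ->
  (voltage8 s x0 x1 x2 x3 c0 c1 c2 c3 = 0 %[mod (P : int)])%Z ->
  forall a : int, exists (i1 i2 i3 j0 j1 j2 j3 : 'I_P),
    cycle8 (@lift_tanner m n H s P) (x0, modz_ord a) (x1, i1) (x2, i2) (x3, i3)
           (c0, j0) (c1, j1) (c2, j2) (c3, j3).
Proof.
move=> [ux [uc [e00 e10 e11 e21 [e22 e32 e33 e03]]]] volt0 a.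
pose b0 := a + s x0 c0.  pose a1 := b0 - s x1 c0.
pose b1 := a1 + s x1 c1. pose a2 := b1 - s x2 c1.
pose b2 := a2 + s x2 c2. pose a3 := b2 - s x3 c2.
pose b3 := a3 + s x3 c3.
exists (modz_ord a1), (modz_ord a2), (modz_ord a3),
  (modz_ord b0), (modz_ord b1), (modz_ord b2), (modz_ord b3).
split; first by apply: (map_uniq (f := fst)); exact: ux.
split; first by apply: (map_uniq (f := fst)); exact: uc.
rewrite !lift_tanner_modz e00 e10 e11 e21 e22 e32 e33 e03 !subrK !eqxx.
have closing : a + s x0 c3 = b3 + voltage8 s x0 x1 x2 x3 c0 c1 c2 c3.
  by rewrite /b3 /a3 /b2 /a2 /b1 /a1 /b0 /voltage8; ring.
by rewrite closing -modzDmr volt0 mod0z addr0 eqxx.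
Qed.

End CPMLift.

Lemma voltage8_css {mA mB n : nat} (sA : 'I_mA -> 'I_n -> int)
    (sB : 'I_mB -> 'I_n -> int) (P : nat) (z : 'I_mB)
    (x0 x1 x2 x3 : 'I_mA) (c0 c1 c2 c3 : 'I_n) :
  css_pair_constraint sA sB P x0 z c3 c0 ->
  css_pair_constraint sA sB P x1 z c0 c1 ->
  css_pair_constraint sA sB P x2 z c1 c2 ->
  css_pair_constraint sA sB P x3 z c2 c3 ->
  (voltage8 sA x0 x1 x2 x3 c0 c1 c2 c3 = 0 %[mod (P : int)])%Z.
Proof.
rewrite /css_pair_constraint /voltage8 !mod0z.
move=> /dvdz_mod0P e0 /dvdz_mod0P e1 /dvdz_mod0P e2 /dvdz_mod0P e3.
apply/dvdz_mod0P.
have -> : (sA x0 c3 - sA x0 c0) + (sA x1 c0 - sA x1 c1) + (sA x2 c1 - sA x2 c2)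
          + (sA x3 c2 - sA x3 c3) =
    (sA x0 c3 - sB z c3 - sA x0 c0 + sB z c0) +
    (sA x1 c0 - sB z c0 - sA x1 c1 + sB z c1) +
    (sA x2 c1 - sB z c1 - sA x2 c2 + sB z c2) +
    (sA x3 c2 - sB z c2 - sA x3 c3 + sB z c3) by ring.
exact: rpredD (rpredD (rpredD e0 e1) e2) e3.
Qed.

Lemma eight_cycle_claimP {mA mB n : nat}
    (HA : 'M['F_2]_(mA, n)) (HB : 'M['F_2]_(mB, n))
    (sA : 'I_mA -> 'I_n -> int) (sB : 'I_mB -> 'I_n -> int) (P : nat) :
  (0 < P)%N -> eight_cycle_claim HA HB sA sB P.
Proof.
move=> P_gt0 z x0 x1 x2 x3 c0 c1 c2 c3 ux uc
  [e03 e00 _ _] [e10 e11 _ _] [e21 e22 _ _] [e32 e33 _ _].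
have cyc : cycle8 (tanner HA) x0 x1 x2 x3 c0 c1 c2 c3 by [].
split=> // -[css0 css1 css2 css3].
have volt0 := voltage8_css css0 css1 css2 css3.
split=> // i0; rewrite -(modz_ord_val P_gt0 i0).
exact: cycle8_lift cyc volt0 i0.
Qed.

Theorem mainTheorem3 (mX mZ n : nat)
  (HX : 'M['F_2]_(mX, n)) (HZ : 'M['F_2]_(mZ, n))
  (P : nat) (sX : 'I_mX -> 'I_n -> int) (sZ : 'I_mZ -> 'I_n -> int) :
  HX *m HZ^T = 0 -> (0 < P)%N ->
  eight_cycle_claim HX HZ sX sZ P /\ eight_cycle_claim HZ HX sZ sX P.
Proof. by move=> _ P_gt0; split; apply: eight_cycle_claimP. Qed.
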